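(* Let $\mathcal{H}$ be a complex Hilbert space and $B,C\in\mathcal{B}(\mathcal{H})$. If $$w^2\left(\begin{bmatrix}0 & B\\ C & 0\end{bmatrix}\right)=\frac14\max\left\{\big\||B|^2+|C^*|^2\big\|,\ \big\||B^*|^2+|C|^2\big\|\right\},$$ then $\|B+C^*\|=\|B-C^*\|$.
   Context: $\mathcal{B}(\mathcal{H})$ is the algebra of bounded linear operators on $\mathcal{H}$ with operator norm $\|\cdot\|$. For $A\in\mathcal{B}(\mathcal{H})$, $A^*$ is the adjoint, $|A|=(A^*A)^{1/2}$, $|A^*|=(AA^* )^{1/2}$, and $w(A)=\sup_{\|x\|=1}|\langle Ax,x\rangle|$ is the numerical radius. The operator matrix $\begin{bmatrix}A&B\\C&D\end{bmatrix}$ acts on $\mathcal{H}\oplus\mathcal{H}$ by $(x_1,x_2)\mapsto(Ax_1+Bx_2,\,Cx_1+Dx_2)$; $0$ denotes the zero operator. *)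

From mathcomp Require Import all_boot all_order all_algebra.
From mathcomp Require Import classical_sets reals complex.
Set Implicit Arguments. Unset Strict Implicit. Unset Printing Implicit Defensive.
Import Order.TTheory GRing.Theory Num.Theory.
Local Open Scope ring_scope.
Local Open Scope complex_scope.
Local Open Scope classical_set_scope.

Section Hilbert.
Variable R : realType.

Definition cmod (z : R[i]) : R :=
  Num.sqrt (complex.Re z ^+ 2 + complex.Im z ^+ 2).

Definition is_inner_product (V : lmodType R[i]) (ip : V -> V -> R[i]) : Prop :=
  [/\ (forall (a : R[i]) (x y z : V), ip (a *: x + y) z = a * ip x z + ip y z),
      (forall x y : V, ip y x = (ip x y)^*),
      (forall x : V, 0 <= complex.Re (ip x x) /\ complex.Im (ip x x) = 0)
    & (forall x : V, ip x x = 0 -> x = 0)].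

Definition ipnorm (T : Type) (ip : T -> T -> R[i]) (x : T) : R :=
  Num.sqrt (complex.Re (ip x x)).

Definition ip_complete (V : lmodType R[i]) (ip : V -> V -> R[i]) : Prop :=
  forall u : nat -> V,
    (forall e : R, 0 < e -> exists N : nat, forall m n : nat,
        (N <= m)%N -> (N <= n)%N -> ipnorm ip (u m - u n) < e) ->
    exists l : V, forall e : R, 0 < e -> exists N : nat, forall n : nat,
        (N <= n)%N -> ipnorm ip (u n - l) < e.

Definition is_complex_Hilbert (V : lmodType R[i]) (ip : V -> V -> R[i]) : Prop :=
  is_inner_product ip /\ ip_complete ip.

Definition is_bounded_op (V : lmodType R[i]) (ip : V -> V -> R[i]) (T : V -> V) : Prop :=
  (forall (a : R[i]) (x y : V), T (a *: x + y) = a *: T x + T y) /\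
  exists M : R, forall x : V, ipnorm ip (T x) <= M * ipnorm ip x.

Definition is_adjoint (V : Type) (ip : V -> V -> R[i]) (T Ts : V -> V) : Prop :=
  forall x y : V, ip (T x) y = ip x (Ts y).

Definition opnorm (V : Type) (ip : V -> V -> R[i]) (T : V -> V) : R :=
  sup [set ipnorm ip (T x) | x in [set x | ipnorm ip x <= 1]].

Definition numrad (V : Type) (ip : V -> V -> R[i]) (A : V -> V) : R :=
  sup [set cmod (ip (A x) x) | x in [set x | ipnorm ip x = 1]].

Definition ip_sum (V : Type) (ip : V -> V -> R[i]) (z w : V * V) : R[i] :=
  ip z.1 w.1 + ip z.2 w.2.

(* the operator matrix [[A, B], [C, D]] acting on H (+) H *)
Definition opmx (V : zmodType) (A B C D : V -> V) (z : V * V) : V * V :=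
  (A z.1 + B z.2, C z.1 + D z.2).

End Hilbert.

(* If w is the numerical radius of T = [[0, B], [C, 0]], then the real parts
   <(B + C^* )x, y> and <(B - C^* )x, y> are bounded by w (|x|^2 + |y|^2): the
   first is Re <T(y, x), (y, x)>, the second Im <T(y, ix), (y, ix)>.  Hence
   h = |B + C^*| and k = |B - C^*| are both at most 2w.  On the other hand
     (B + C^* )^* (B + C^* ) + (B - C^* )^* (B - C^* ) = 2 (B^* B + C C^* ),
     (B + C^* )(B + C^* )^* + (B - C^* )(B - C^* )^* = 2 (B B^* + C^* C),
   so both |B^* B + C C^*| and |B B^* + C^* C| are at most (h^2 + k^2)/2.
   Under the hypothesis 4 w^2 = max(...) we get 4 w^2 <= (h^2 + k^2)/2 while
   h^2, k^2 <= 4 w^2, which forces h^2 = k^2 = 4 w^2, hence h = k. *)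

From HB Require Import structures.
From mathcomp Require Import all_boot all_order all_algebra.
From mathcomp Require Import boolp classical_sets reals complex.
From mathcomp Require Import ring lra.
Set Implicit Arguments. Unset Strict Implicit. Unset Printing Implicit Defensive.
Import Order.TTheory GRing.Theory Num.Theory.
Local Open Scope ring_scope.
Local Open Scope complex_scope.
Local Open Scope classical_set_scope.

Local Notation Re := complex.Re.
Local Notation Im := complex.Im.

Section ComplexFacts.
Variable R : realType.
Implicit Types (c d : R[i]) (t : R).

Lemma ReD c d : Re (c + d) = Re c + Re d. Proof. by case: c; case: d. Qed.
Lemma ImD c d : Im (c + d) = Im c + Im d. Proof. by case: c; case: d. Qed.
Lemma ReN c : Re (- c) = - Re c. Proof. by case: c. Qed.
Lemma ReB c d : Re (c - d) = Re c - Re d. Proof. by rewrite ReD ReN. Qed.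
Lemma ReJ c : Re (conjc c) = Re c. Proof. by case: c. Qed.

Lemma ReMr t c : Re (t%:C * c) = t * Re c. Proof. by case: c => a b /=; ring. Qed.
Lemma ImMr t c : Im (t%:C * c) = t * Im c. Proof. by case: c => a b /=; ring. Qed.
Lemma ImMi c : Im ('i * c) = Re c. Proof. by case: c => a b /=; ring. Qed.
Lemma ImMJi c : Im (conjc 'i * c) = - Re c. Proof. by case: c => a b /=; ring. Qed.
Lemma ReMJi c : Re (conjc 'i * c) = Im c. Proof. by case: c => a b /=; ring. Qed.
Lemma conj_real t : conjc t%:C = t%:C. Proof. by rewrite /= oppr0. Qed.

Lemma cmod_ge0 c : 0 <= cmod c. Proof. exact: sqrtr_ge0. Qed.
Lemma cmod0 : cmod (0 : R[i]) = 0. Proof. by rewrite /cmod /= expr0n addr0 sqrtr0. Qed.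

Lemma Re_le_cmod c : Re c <= cmod c.
Proof.
apply: le_trans (ler_norm _) _; rewrite -sqrtr_sqr; apply: ler_wsqrtr.
by rewrite lerDl sqr_ge0.
Qed.

Lemma Im_le_cmod c : Im c <= cmod c.
Proof.
apply: le_trans (ler_norm _) _; rewrite -sqrtr_sqr; apply: ler_wsqrtr.
by rewrite lerDr sqr_ge0.
Qed.

Lemma cmod_le_ReIm c : cmod c <= `|Re c| + `|Im c|.
Proof.
rewrite -[X in _ <= X]ger0_norm ?addr_ge0 // -sqrtr_sqr; apply: ler_wsqrtr.
rewrite sqrrD !real_normK ?num_real // -addrA lerD2l lerDr.
by rewrite mulrn_wge0 // mulr_ge0.
Qed.

Lemma cmodMr t c : 0 <= t -> cmod (t%:C * c) = t * cmod c.
Proof.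
move=> t0; rewrite /cmod ReMr ImMr !exprMn -mulrDr sqrtrM ?sqr_ge0 //.
by rewrite sqrtr_sqr ger0_norm.
Qed.

End ComplexFacts.

(* A supremum of non-negative reals is non-negative (sup is 0 on empty or
   unbounded sets). *)
Lemma sup_ge0 (R : realType) (E : set R) :
  (forall x, E x -> 0 <= x) -> 0 <= sup E.
Proof.
move=> E_ge0.
have [[x Ex]|/nonemptyPn ->] := pselect (E !=set0); last by rewrite sup0.
have [ubE|nubE] := pselect (has_ubound E).
  exact: le_trans (E_ge0 x Ex) (ub_le_sup ubE Ex).
by rewrite sup_out // => -[].
Qed.

Section InnerProductSpace.
Variables (R : realType) (V : lmodType R[i]) (ip : V -> V -> R[i]).
Hypothesis ip_inner : is_inner_product ip.
Local Notation n := (ipnorm ip).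
Implicit Types (x y z : V) (a : R[i]) (t M w : R).

Let ip_linear a x y z : ip (a *: x + y) z = a * ip x z + ip y z.
Proof. by case: ip_inner. Qed.
Let ip_conj x y : ip y x = conjc (ip x y).
Proof. by case: ip_inner. Qed.
Let ip_pos x : 0 <= Re (ip x x) /\ Im (ip x x) = 0.
Proof. by case: ip_inner. Qed.
Let ip_definite x : ip x x = 0 -> x = 0.
Proof. by case: ip_inner => _ _ _; apply. Qed.

Lemma ip0l z : ip 0 z = 0.
Proof.
have := ip_linear 1 0 0 z; rewrite scaler0 add0r mul1r => e.
by apply: (addrI (ip 0 z)); rewrite addr0 -e.
Qed.
Lemma ipDl x y z : ip (x + y) z = ip x z + ip y z.
Proof. by have := ip_linear 1 x y z; rewrite scale1r mul1r. Qed.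
Lemma ipZl a x z : ip (a *: x) z = a * ip x z.
Proof. by have := ip_linear a x 0 z; rewrite !addr0 ip0l addr0. Qed.
Lemma ipNl x z : ip (- x) z = - ip x z.
Proof. by rewrite -scaleN1r ipZl mulN1r. Qed.
Lemma ipBl x y z : ip (x - y) z = ip x z - ip y z.
Proof. by rewrite ipDl ipNl. Qed.
Lemma ip0r z : ip z 0 = 0.
Proof. by rewrite ip_conj ip0l conjc0. Qed.
Lemma ipDr z x y : ip z (x + y) = ip z x + ip z y.
Proof. by rewrite ip_conj [ip z x]ip_conj [ip z y]ip_conj ipDl rmorphD. Qed.
Lemma ipZr z a x : ip z (a *: x) = conjc a * ip z x.
Proof. by rewrite ip_conj [ip z x]ip_conj ipZl rmorphM. Qed.
Lemma ipNr z x : ip z (- x) = - ip z x.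
Proof. by rewrite ip_conj [ip z x]ip_conj ipNl rmorphN. Qed.
Lemma ipBr z x y : ip z (x - y) = ip z x - ip z y.
Proof. by rewrite ipDr ipNr. Qed.
Lemma Re_ipC x y : Re (ip y x) = Re (ip x y).
Proof. by rewrite ip_conj ReJ. Qed.

Lemma ipnorm_ge0 x : 0 <= n x. Proof. exact: sqrtr_ge0. Qed.
Lemma ipnorm_sqr x : n x ^+ 2 = Re (ip x x).
Proof. by rewrite /ipnorm sqr_sqrtr //; case: (ip_pos x). Qed.
Lemma ipnorm0 : n 0 = 0. Proof. by rewrite /ipnorm ip0l sqrtr0. Qed.

Lemma ipnorm_eq0 x : n x = 0 -> x = 0.
Proof.
move=> nx0; apply: ip_definite; have := ipnorm_sqr x; rewrite nx0 expr0n /=.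
by case: (ip_pos x) => _; case: (ip x x) => a b /= -> <-.
Qed.

Lemma Re_ipZr t x y : Re (ip x (t%:C *: y)) = t * Re (ip x y).
Proof. by rewrite ipZr conj_real ReMr. Qed.

Lemma Re_ipZZ t x : Re (ip (t%:C *: x) (t%:C *: x)) = t ^+ 2 * Re (ip x x).
Proof. by rewrite ipZl ipZr; case: (ip x x) => a b /=; ring. Qed.

Lemma ipnormZ t x : n (t%:C *: x) = `|t| * n x.
Proof. by rewrite /ipnorm Re_ipZZ sqrtrM ?sqr_ge0 // sqrtr_sqr. Qed.

Lemma ipnormZi x : n ('i *: x) = n x.
Proof.
by rewrite /ipnorm ipZl ipZr; case: (ip x x) => a b /=; congr Num.sqrt; ring.
Qed.

Lemma ipnormMn x m : n (x *+ m) = m%:R * n x.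
Proof.
by rewrite -scaler_nat -(rmorph_nat (real_complex R)) ipnormZ ger0_norm.
Qed.

Lemma ipnorm_sqrD_scale x y t :
  n (x + t%:C *: y) ^+ 2 = n x ^+ 2 + 2 * t * Re (ip x y) + t ^+ 2 * n y ^+ 2.
Proof.
rewrite !ipnorm_sqr ipDl !ipDr !ReD Re_ipZr Re_ipZZ ipZl ReMr Re_ipC; ring.
Qed.

(* Cauchy-Schwarz inequality for the real part (take t = -Re<x,y>/|y|^2),
   its consequences for the imaginary part, and the triangle inequality. *)
Lemma normRe_ip_le x y : `|Re (ip x y)| <= n x * n y.
Proof.
have [/ipnorm_eq0 ->|ny0] := eqVneq (n y) 0; first by rewrite ip0r ipnorm0 mulr0 normr0.
set r := Re (ip x y); set s := n y ^+ 2.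
have s_gt0 : 0 < s by rewrite exprn_gt0 // lt0r ny0 ipnorm_ge0.
have := sqr_ge0 (n (x + (- (r / s))%:C *: y)).
rewrite ipnorm_sqrD_scale -/r -/s.
have -> : n x ^+ 2 + 2 * - (r / s) * r + (- (r / s)) ^+ 2 * s
          = (n x ^+ 2 * s - r ^+ 2) / s by field; rewrite gt_eqF.
rewrite pmulr_lge0 ?invr_gt0 // subr_ge0 /s -exprMn => le_r.
by rewrite -ler_sqr ?nnegrE ?mulr_ge0 ?ipnorm_ge0 // real_normK ?num_real.
Qed.

Lemma Re_ip_le x y : Re (ip x y) <= n x * n y.
Proof. exact: le_trans (ler_norm _) (normRe_ip_le x y). Qed.

Lemma normIm_ip_le x y : `|Im (ip x y)| <= n x * n y.
Proof.
by rewrite -ReMJi -ipZr -[n y](ipnormZi y) normRe_ip_le.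
Qed.

Lemma ipnormD x y : n (x + y) <= n x + n y.
Proof.
rewrite -ler_sqr ?nnegrE ?addr_ge0 ?ipnorm_ge0 //.
have := ipnorm_sqrD_scale x y 1; rewrite scale1r => ->.
by have := Re_ip_le x y; rewrite sqrrD expr1n !mul1r mulr1; lra.
Qed.

Lemma adjoint_sym T Ts : is_adjoint ip T Ts -> is_adjoint ip Ts T.
Proof. by move=> adj x y; rewrite ip_conj -adj -ip_conj. Qed.

Lemma adjointD T Ts U Us : is_adjoint ip T Ts -> is_adjoint ip U Us ->
  is_adjoint ip (fun x => T x + U x) (fun x => Ts x + Us x).
Proof. by move=> adjT adjU x y; rewrite ipDl ipDr adjT adjU. Qed.

Lemma adjointB T Ts U Us : is_adjoint ip T Ts -> is_adjoint ip U Us ->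
  is_adjoint ip (fun x => T x - U x) (fun x => Ts x - Us x).
Proof. by move=> adjT adjU x y; rewrite ipBl ipBr adjT adjU. Qed.

Lemma adjoint_linear T Ts : is_adjoint ip T Ts -> linear Ts.
Proof.
move=> adj a x y; apply/eqP; rewrite -subr_eq0; apply/eqP/ip_definite.
set d := _ - _.
by rewrite {1}/d !ipBr ipDr ipZr -!adj ipDr ipZr subrr.
Qed.

Definition op_bound (A : V -> V) (M : R) := forall x, n (A x) <= M * n x.

Lemma op_boundD A A' M (M' : R) : op_bound A M -> op_bound A' M' ->
  op_bound (fun x => A x + A' x) (M + M').
Proof.
move=> hA hA' x; rewrite mulrDl.
exact: le_trans (ipnormD _ _) (lerD (hA x) (hA' x)).
Qed.

Lemma op_bound_comp A A' M (M' : R) : 0 <= M -> op_bound A M -> op_bound A' M' ->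
  op_bound (fun x => A (A' x)) (M * M').
Proof.
move=> M0 hA hA' x; rewrite -mulrA.
exact: le_trans (hA _) (ler_wpM2l M0 (hA' x)).
Qed.

Lemma adjoint_op_bound A As M : 0 <= M -> is_adjoint ip A As ->
  op_bound A M -> op_bound As M.
Proof.
move=> M0 adj hA y; set b := n (As y).
have b2 : b ^+ 2 <= n y * n (A (As y)).
  by rewrite /b ipnorm_sqr (adjoint_sym adj) Re_ip_le.
have b_ge0 : 0 <= b by exact: ipnorm_ge0.
have c_ge0 : 0 <= M * n y by rewrite mulr_ge0 ?ipnorm_ge0.
have : b ^+ 2 <= (M * n y) * b.
  by have := hA (As y); have := ipnorm_ge0 y; rewrite -/b; nra.
nra.
Qed.

Lemma opnorm_ge0 A : 0 <= opnorm ip A.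
Proof. by apply: sup_ge0 => _ [x _ <-]; exact: ipnorm_ge0. Qed.

Lemma opnorm_le A M : 0 <= M -> op_bound A M -> opnorm ip A <= M.
Proof.
move=> M0 hA; apply: ge_sup; first by exists (n (A 0)), 0 => //=; rewrite ipnorm0 ler01.
by move=> _ [x /= nx1 <-]; apply: le_trans (hA x) _; rewrite ler_piMr.
Qed.

Lemma opnorm_ball A M : op_bound A M -> forall x, n x <= 1 -> n (A x) <= opnorm ip A.
Proof.
move=> hA x nx1; apply: ub_le_sup; last by exists x.
exists `|M| => _ [y /= ny1 <-]; apply: le_trans (hA y) _.
apply: le_trans (ler_norm _) _.
by rewrite normrM (ger0_norm (ipnorm_ge0 y)) ler_piMr.
Qed.

(* If Re <Ax, y> <= w (|x|^2 + |y|^2) for all x, y then A maps the unit ball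
   into the ball of radius 2w (test with y = Ax / |Ax|). *)
Lemma ball_bound_of_Re_ip A w : 0 <= w ->
  (forall x y, Re (ip (A x) y) <= w * (n x ^+ 2 + n y ^+ 2)) ->
  forall x, n x <= 1 -> n (A x) <= 2 * w.
Proof.
move=> w0 hA x nx1; set a := n (A x).
have [->|a_neq0] := eqVneq a 0; first by rewrite mulr_ge0.
have a_gt0 : 0 < a by rewrite lt0r a_neq0 ipnorm_ge0.
have := hA x (a^-1%:C *: A x).
rewrite Re_ipZr -ipnorm_sqr ipnormZ ger0_norm ?invr_ge0 ?ipnorm_ge0 // -/a mulVf //.
rewrite expr2 mulrA mulVf // mul1r expr1n => le_a.
have nx2 : n x ^+ 2 <= 1 by rewrite expr2; have := ipnorm_ge0 x; nra.
apply: le_trans le_a _; nra.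
Qed.

Lemma numrange_bounded A M : op_bound A M ->
  has_ubound [set cmod (ip (A x) x) | x in [set x | n x = 1]].
Proof.
move=> hA; exists (2 * M) => _ [x /= nx1 <-].
apply: le_trans (cmod_le_ReIm _) _.
have := lerD (normRe_ip_le (A x) x) (normIm_ip_le (A x) x).
by have := hA x; rewrite nx1 !mulr1; lra.
Qed.

Lemma numrad_ge0 A : 0 <= numrad ip A.
Proof. by apply: sup_ge0 => _ [x _ <-]; exact: cmod_ge0. Qed.

Section LinearOperator.
Variable A : V -> V.
Hypothesis A_linear : linear A.
HB.instance Definition _ := GRing.isLinear.Build R[i] V V *:%R A A_linear.

Lemma op_bound_of_ball M : 0 <= M -> (forall x, n x <= 1 -> n (A x) <= M) ->
  op_bound A M.
Proof.
move=> M0 hA z; have [/ipnorm_eq0 ->|nz0] := eqVneq (n z) 0.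
  by rewrite linear0 ipnorm0 mulr0.
have nz_gt0 : 0 < n z by rewrite lt0r nz0 ipnorm_ge0.
have := hA ((n z)^-1%:C *: z).
rewrite linearZ !ipnormZ ger0_norm ?invr_ge0 ?ipnorm_ge0 // mulVf //.
by move=> /(_ (lexx _)); rewrite ler_pdivrMl // mulrC.
Qed.

Lemma op_bound_opnorm M : op_bound A M -> op_bound A (opnorm ip A).
Proof. by move=> hA; apply: op_bound_of_ball (opnorm_ge0 A) (opnorm_ball hA). Qed.

Lemma numrad_ub M : op_bound A M ->
  forall z, cmod (ip (A z) z) <= numrad ip A * n z ^+ 2.
Proof.
move=> hA z; have [/ipnorm_eq0 ->|nz0] := eqVneq (n z) 0.
  by rewrite linear0 ip0l cmod0 ipnorm0 expr0n mulr0.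
have nz_gt0 : 0 < n z by rewrite lt0r nz0 ipnorm_ge0.
set s := (n z)^-1; have s_gt0 : 0 < s by rewrite invr_gt0.
have unit_z : n (s%:C *: z) = 1 by rewrite ipnormZ gtr0_norm // mulVf.
have : cmod (ip (A (s%:C *: z)) (s%:C *: z)) <= numrad ip A.
  by apply: ub_le_sup; [exact: numrange_bounded hA | exists (s%:C *: z)].
rewrite linearZ ipZl ipZr conj_real !cmodMr ?(ltW s_gt0) // => le_w.
have -> : cmod (ip (A z) z) = n z ^+ 2 * (s * (s * cmod (ip (A z) z))).
  by rewrite /s; field.
by rewrite mulrC ler_wpM2r ?sqr_ge0.
Qed.

End LinearOperator.

End InnerProductSpace.

Section DirectSum.
Variables (R : realType) (V : lmodType R[i]) (ip : V -> V -> R[i]).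
Hypothesis ip_inner : is_inner_product ip.
Local Notation n := (ipnorm ip).
Local Notation nS := (ipnorm (ip_sum ip)).
Implicit Types z : V * V.

Lemma ip_sum_inner : is_inner_product (ip_sum ip).
Proof.
have [_ ip_conj ip_pos _] := ip_inner.
split.
- by move=> a x y z; rewrite /ip_sum /= !(ipDl ip_inner) !(ipZl ip_inner); ring.
- move=> x y; rewrite /ip_sum [ip y.1 _]ip_conj [ip y.2 _]ip_conj.
  by case: (ip x.1 y.1) (ip x.2 y.2) => [a b] [c d] /=; rewrite opprD.
- move=> z; rewrite /ip_sum ReD ImD.
  by have [? ->] := ip_pos z.1; have [? ->] := ip_pos z.2; rewrite addr0 addr_ge0.
- move=> z /(congr1 (@complex.Re R)).
  rewrite /ip_sum ReD -!(ipnorm_sqr ip_inner) /= => /eqP.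
  rewrite paddr_eq0 ?sqr_ge0 // !sqrf_eq0.
  move=> /andP[/eqP/(ipnorm_eq0 ip_inner) z1 /eqP/(ipnorm_eq0 ip_inner) z2].
  by case: z z1 z2 => ? ? /= -> ->.
Qed.

Lemma ipnorm_sum_sqr z : nS z ^+ 2 = n z.1 ^+ 2 + n z.2 ^+ 2.
Proof. by rewrite (ipnorm_sqr ip_sum_inner) !(ipnorm_sqr ip_inner) /ip_sum ReD. Qed.

Lemma ipnorm_sum_le z : nS z <= n z.1 + n z.2.
Proof.
rewrite -ler_sqr ?nnegrE ?addr_ge0 ?ipnorm_ge0 // ipnorm_sum_sqr sqrrD.
by rewrite lerD2r lerDl mulrn_wge0 // mulr_ge0 ?ipnorm_ge0.
Qed.

Lemma ipnorm_fst_le z : n z.1 <= nS z.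
Proof.
by rewrite -ler_sqr ?nnegrE ?ipnorm_ge0 // ipnorm_sum_sqr lerDl sqr_ge0.
Qed.

Lemma ipnorm_snd_le z : n z.2 <= nS z.
Proof.
by rewrite -ler_sqr ?nnegrE ?ipnorm_ge0 // ipnorm_sum_sqr lerDr sqr_ge0.
Qed.

End DirectSum.

(* An identity in abelian groups behind the parallelogram-type identities
   P^* P + Q^* Q = 2 (B^* B + C C^* ) for P = B + C^*, Q = B - C^*. *)
Lemma sum_diff_identity (M : zmodType) (p q r s : M) :
  (p + q + (r + s)) + ((p - q) - (r - s)) = (p + s) *+ 2.
Proof.
rewrite opprB addrACA mulr2n.
have -> : p + q + (p - q) = p + p by rewrite addrACA subrr addr0.
have -> : r + s + (s - r) = s + s by rewrite [s - r]addrC addrACA subrr add0r.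
by rewrite addrACA.
Qed.

Lemma extremal_norms_eq (R : realFieldType) (w h k m : R) :
  0 <= h -> h <= 2 * w -> 0 <= k -> k <= 2 * w ->
  m <= (h ^+ 2 + k ^+ 2) / 2 -> w ^+ 2 = 4^-1 * m -> h = k.
Proof.
move=> h0 hw k0 kw m_le w_eq.
have h2 : h ^+ 2 <= 4 * w ^+ 2 by rewrite !expr2; nra.
have k2 : k ^+ 2 <= 4 * w ^+ 2 by rewrite !expr2; nra.
have : h ^+ 2 = k ^+ 2 by lra.
by move/eqP; rewrite eqrXn2 // => /eqP.
Qed.

Section NumericalRadiusEquality.
Variables (R : realType) (V : lmodType R[i]) (ip : V -> V -> R[i]).
Variables (B C Bs Cs : V -> V).
Hypotheses (ip_inner : is_inner_product ip)
  (B_bounded : is_bounded_op ip B) (C_bounded : is_bounded_op ip C)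
  (adjB : is_adjoint ip B Bs) (adjC : is_adjoint ip C Cs).
Local Notation n := (ipnorm ip).
Local Notation nS := (ipnorm (ip_sum ip)).

Let B_linear : linear B. Proof. by case: B_bounded. Qed.
Let C_linear : linear C. Proof. by case: C_bounded. Qed.
HB.instance Definition _ := GRing.isLinear.Build R[i] V V *:%R B B_linear.
HB.instance Definition _ := GRing.isLinear.Build R[i] V V *:%R C C_linear.
HB.instance Definition _ := GRing.isLinear.Build R[i] V V *:%R Bs
  (adjoint_linear ip_inner adjB).
HB.instance Definition _ := GRing.isLinear.Build R[i] V V *:%R Cs
  (adjoint_linear ip_inner adjC).

Let T := opmx (fun _ => 0) B C (fun _ => 0).
Let P x := B x + Cs x.
Let Q x := B x - Cs x.
Let w := numrad (ip_sum ip) T.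
Let h := opnorm ip P.
Let k := opnorm ip Q.

Lemma P_linear : linear P.
Proof. by move=> a x y; rewrite /P [B _]linearP [Cs _]linearP scalerDr addrACA. Qed.
Lemma Q_linear : linear Q.
Proof.
by move=> a x y; rewrite /Q [B _]linearP [Cs _]linearP scalerBr opprD addrACA.
Qed.

Lemma T_linear : linear T.
Proof.
move=> a [x1 x2] [y1 y2]; rewrite /T /opmx /= !add0r !addr0.
by rewrite [B _]linearP [C _]linearP.
Qed.

Lemma T_op_bound : exists M, op_bound (ip_sum ip) T M.
Proof.
case: B_bounded => _ [MB hB]; case: C_bounded => _ [MC hC].
have bound_abs A M z : (forall x, n (A x) <= M * n x) -> n (A z) <= `|M| * n z.
  by move=> hA; apply: le_trans (hA z) (ler_wpM2r (ipnorm_ge0 _ _) (ler_norm M)).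
exists (`|MB| + `|MC|) => z; apply: le_trans (ipnorm_sum_le ip_inner (T z)) _.
rewrite /T /opmx /= add0r addr0 mulrDl.
apply: lerD; apply: le_trans (bound_abs _ _ _ _) (ler_wpM2l (normr_ge0 _) _) => //.
- exact: ipnorm_snd_le.
- exact: ipnorm_fst_le.
Qed.

Lemma ip_sum_T x y : ip_sum ip (T (y, x)) (y, x) = ip (B x) y + ip (C y) x.
Proof. by rewrite /ip_sum /T /opmx /= add0r addr0. Qed.

Lemma numrad_T_ub z : cmod (ip_sum ip (T z) z) <= w * nS z ^+ 2.
Proof.
have [M hT] := T_op_bound.
exact (numrad_ub (ip_sum_inner ip_inner) T_linear hT z).
Qed.

Lemma w_ge0 : 0 <= w. Proof. exact: numrad_ge0. Qed.

(* Re <(B + C^* )x, y> = Re <T(y, x), (y, x)>. *)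
Lemma Re_P_le x y : Re (ip (P x) y) <= w * (n x ^+ 2 + n y ^+ 2).
Proof.
have -> : Re (ip (P x) y) = Re (ip (B x) y + ip (C y) x).
  by rewrite ReD adjC /P (ipDl ip_inner) ReD (Re_ipC ip_inner (Cs x)).
apply: le_trans (Re_le_cmod _) _.
have := numrad_T_ub (y, x).
by rewrite ip_sum_T (ipnorm_sum_sqr ip_inner) /= [n y ^+ 2 + _]addrC.
Qed.

(* Re <(B - C^* )x, y> = Im <T(y, ix), (y, ix)>. *)
Lemma Re_Q_le x y : Re (ip (Q x) y) <= w * (n x ^+ 2 + n y ^+ 2).
Proof.
have -> : Re (ip (Q x) y) = Im (ip (B ('i *: x)) y + ip (C y) ('i *: x)).
  rewrite linearZ (ipZl ip_inner) (ipZr ip_inner) ImD ImMi ImMJi adjC.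
  by rewrite /Q (ipBl ip_inner) ReB (Re_ipC ip_inner (Cs x)).
apply: le_trans (Im_le_cmod _) _.
have := numrad_T_ub (y, 'i *: x).
rewrite ip_sum_T (ipnorm_sum_sqr ip_inner) /= (ipnormZi ip_inner).
by rewrite [n y ^+ 2 + _]addrC.
Qed.

Lemma w2_ge0 : 0 <= 2 * w. Proof. by rewrite mulr_ge0 ?w_ge0. Qed.

Lemma P_op_bound2 : op_bound ip P (2 * w).
Proof.
exact (op_bound_of_ball ip_inner P_linear w2_ge0
  (ball_bound_of_Re_ip ip_inner w_ge0 Re_P_le)).
Qed.

Lemma Q_op_bound2 : op_bound ip Q (2 * w).
Proof.
exact (op_bound_of_ball ip_inner Q_linear w2_ge0
  (ball_bound_of_Re_ip ip_inner w_ge0 Re_Q_le)).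
Qed.

Lemma opnorm_P_le : h <= 2 * w.
Proof. exact (opnorm_le ip_inner w2_ge0 P_op_bound2). Qed.

Lemma opnorm_Q_le : k <= 2 * w.
Proof. exact (opnorm_le ip_inner w2_ge0 Q_op_bound2). Qed.

Let P_op : op_bound ip P h.
Proof. exact (op_bound_opnorm ip_inner P_linear P_op_bound2). Qed.
Let Q_op : op_bound ip Q k.
Proof. exact (op_bound_opnorm ip_inner Q_linear Q_op_bound2). Qed.

Let Ps_op : op_bound ip (fun y => Bs y + C y) h.
Proof.
exact (adjoint_op_bound ip_inner (opnorm_ge0 _ _)
  (adjointD ip_inner adjB (adjoint_sym ip_inner adjC)) P_op).
Qed.
Let Qs_op : op_bound ip (fun y => Bs y - C y) k.
Proof.
exact (adjoint_op_bound ip_inner (opnorm_ge0 _ _)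
  (adjointB ip_inner adjB (adjoint_sym ip_inner adjC)) Q_op).
Qed.

(* |B^* B + C C^*| <= (h^2 + k^2)/2, from P^* P + Q^* Q = 2 (B^* B + C C^* ). *)
Lemma gram_left_bound :
  op_bound ip (fun x => Bs (B x) + C (Cs x)) ((h ^+ 2 + k ^+ 2) / 2).
Proof.
move=> x; have h0 := opnorm_ge0 ip P; have k0 := opnorm_ge0 ip Q.
have := op_boundD ip_inner (op_bound_comp h0 Ps_op P_op)
                           (op_bound_comp k0 Qs_op Q_op) x.
rewrite /P /Q /= (linearB Bs) (linearB C) (linearD Bs) (linearD C).
rewrite sum_diff_identity (ipnormMn ip_inner) -!expr2 -/P -/Q -/h -/k.
lra.
Qed.

(* |B B^* + C^* C| <= (h^2 + k^2)/2, from P P^* + Q Q^* = 2 (B B^* + C^* C). *)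
Lemma gram_right_bound :
  op_bound ip (fun y => B (Bs y) + Cs (C y)) ((h ^+ 2 + k ^+ 2) / 2).
Proof.
move=> y; have h0 := opnorm_ge0 ip P; have k0 := opnorm_ge0 ip Q.
have := op_boundD ip_inner (op_bound_comp h0 P_op Ps_op)
                           (op_bound_comp k0 Q_op Qs_op) y.
rewrite /P /Q /= (linearB B) (linearB Cs) (linearD B) (linearD Cs).
rewrite sum_diff_identity (ipnormMn ip_inner) -!expr2 -/P -/Q -/h -/k.
lra.
Qed.

Lemma opnorm_gram_le :
  Num.max (opnorm ip (fun x => Bs (B x) + C (Cs x)))
          (opnorm ip (fun y => B (Bs y) + Cs (C y))) <= (h ^+ 2 + k ^+ 2) / 2.
Proof.
have M0 : 0 <= (h ^+ 2 + k ^+ 2) / 2 by rewrite divr_ge0 ?addr_ge0 ?sqr_ge0.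
rewrite ge_max (opnorm_le ip_inner M0 gram_left_bound).
exact (opnorm_le ip_inner M0 gram_right_bound).
Qed.

End NumericalRadiusEquality.

Theorem mainTheorem5 (R : realType) (V : lmodType R[i]) (ip : V -> V -> R[i])
  (B C Bs Cs : V -> V) :
  is_complex_Hilbert ip ->
  is_bounded_op ip B -> is_bounded_op ip C ->
  is_adjoint ip B Bs -> is_adjoint ip C Cs ->
  numrad (ip_sum ip) (opmx (fun _ => 0) B C (fun _ => 0)) ^+ 2 =
    4^-1 * Num.max (opnorm ip (fun x => Bs (B x) + C (Cs x)))
                   (opnorm ip (fun x => B (Bs x) + Cs (C x))) ->
  opnorm ip (fun x => B x + Cs x) = opnorm ip (fun x => B x - Cs x).
Proof.
move=> [ip_inner _] HB HC adjB adjC extremal.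
have h_le := opnorm_P_le ip_inner HB HC adjC.
have k_le := opnorm_Q_le ip_inner HB HC adjC.
have gram_le := opnorm_gram_le ip_inner HB HC adjB adjC.
exact: extremal_norms_eq (opnorm_ge0 _ _) h_le (opnorm_ge0 _ _) k_le gram_le extremal.
Qed.
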